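(* Let $G$ be a circle intersection graph (with at least one vertex). Then $G$ has a vertex $v$ such that the subgraph of $G$ induced on $\{v\}\cup N(v)$ does not contain an induced subgraph isomorphic to $K_{1,6}$.
   Context: A graph $G$ is a circle intersection graph if its vertices can be put in one-to-one correspondence with closed disks (circles) of arbitrary positive radii in the plane so that two vertices are adjacent if and only if the corresponding disks intersect (tangent circles are considered to intersect). $N(v)$ is the set of neighbors of $v$; $K_{1,6}$ is the star with $6$ leaves. *)

From mathcomp Require Import all_boot.
From Stdlib Require Import Reals.
Set Implicit Arguments. Unset Strict Implicit. Unset Printing Implicit Defensive.

Definition simple_graph (T : finType) (adj : rel T) : Prop :=
  symmetric adj /\ irreflexive adj.

Definition disks_intersect (c1x c1y r1 c2x c2y r2 : R) : Prop :=
  (sqrt ((c1x - c2x)^2 + (c1y - c2y)^2) <= r1 + r2)%R.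

Definition circle_intersection_graph (T : finType) (adj : rel T) : Prop :=
  exists (cx cy r : T -> R),
    (forall v, (0 < r v)%R) /\
    (forall u v, u != v -> (adj u v <-> disks_intersect (cx u) (cy u) (r u) (cx v) (cy v) (r v))).

Definition closed_nbhd (T : finType) (adj : rel T) (v : T) : pred T :=
  fun x => (x == v) || adj v x.

(* The subgraph of G induced on the vertex set S contains an induced K_{1,6}:
   a centre x and six distinct leaves y_0..y_5, all in S, with x adjacent to
   every leaf and the leaves pairwise non-adjacent. (Distinctness of x from
   the leaves follows from irreflexivity.) *)
Definition has_induced_K16_in (T : finType) (adj : rel T) (S : pred T) : Prop :=
  exists (x : T) (y : 'I_6 -> T),
    S x /\ (forall i, S (y i)) /\ injective y /\
    (forall i, adj x (y i)) /\
    (forall i j, i != j -> ~~ adj (y i) (y j)).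

From mathcomp Require Import all_boot.
From Stdlib Require Import Reals Lra Psatz Rgeom.

(* Take a vertex v whose disk (centre c, radius rho) is smallest.  The six
   leaves of an induced K_{1,6} in N[v] are pairwise non-adjacent, so none of
   them is v: they are six pairwise disjoint disks of radius >= rho meeting
   the disk of v.  Moving each centre towards c until it is within 2 rho of c
   (and still at least rho inside its own disk) yields six points in the disk
   of radius 2 rho about c at mutual distances > 2 rho.  This is impossible:
   two points of norm <= R in a closed 60-degree cone are at distance <= R,
   the plane is covered by six such cones, and after a rotation putting one
   point on a boundary ray the pigeonhole principle puts two points in a
   common cone. *)

Section Plane.

Open Scope R_scope.

Implicit Types (a b c p q u : R * R) (M : R).

Definition vsub a b : R * R := (a.1 - b.1, a.2 - b.2).
Definition vdot a b := a.1 * b.1 + a.2 * b.2.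
Definition vcross a b := a.1 * b.2 - a.2 * b.1.
Definition vnorm2 a := a.1 ^ 2 + a.2 ^ 2.
Definition vdist a b := sqrt (vnorm2 (vsub a b)).

Lemma vnorm2_ge0 a : 0 <= vnorm2 a.
Proof. rewrite /vnorm2; nra. Qed.

Lemma vdist_ge0 a b : 0 <= vdist a b.
Proof. exact: sqrt_pos. Qed.

Lemma vdist_sqr a b : vdist a b ^ 2 = vnorm2 (vsub a b).
Proof. exact/pow2_sqrt/vnorm2_ge0. Qed.

Lemma vdist_sym a b : vdist a b = vdist b a.
Proof. by rewrite /vdist /vnorm2 /=; f_equal; ring. Qed.

Lemma vdist_triangle a b c : vdist a c <= vdist a b + vdist b c.
Proof. by have := triangle a.1 a.2 c.1 c.2 b.1 b.2; rewrite /dist_euc !Rsqr_pow2. Qed.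

Definition segment_pt a c s : R * R := (a.1 + s * (c.1 - a.1), a.2 + s * (c.2 - a.2)).

Lemma vdist_segment_pt a c s : 0 <= s <= 1 ->
  vdist (segment_pt a c s) a = s * vdist c a /\
  vdist (segment_pt a c s) c = (1 - s) * vdist c a.
Proof.
move=> [s_ge0 s_le1].
have scale t x : 0 <= t -> sqrt (t ^ 2 * x) = t * sqrt x.
  by move=> t_ge0; rewrite sqrt_mult_alt ?sqrt_pow2 //; nra.
rewrite /vdist -!scale; try lra.
by split; f_equal; rewrite /vnorm2 /=; ring.
Qed.

Lemma shrink_towards_centre a c ra rho : 0 < rho <= ra -> vdist a c <= rho + ra ->
  exists q, vdist q c <= 2 * rho /\ vdist q a <= ra - rho.
Proof.
move=> rho_range meet; rewrite vdist_sym in meet.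
have d_ge0 := vdist_ge0 c a.
case: (Rle_lt_dec (vdist c a) (ra - rho)) => [near | far].
- exists (segment_pt a c 1).
  have [-> ->] := vdist_segment_pt a c 1 ltac:(lra); lra.
- pose s := (ra - rho) / vdist c a.
  have sd : s * vdist c a = ra - rho by rewrite /s; field; lra.
  have s_range : 0 <= s <= 1 by split; nra.
  exists (segment_pt a c s).
  have [-> ->] := vdist_segment_pt a c _ s_range.
  nra.
Qed.

Lemma eisenstein_polar_sqr (a1 a2 b1 b2 : R) :
  0 <= a1 -> 0 <= a2 -> 0 <= b1 -> 0 <= b2 ->
  (a1 ^ 2 + a1 * a2 + a2 ^ 2) * (b1 ^ 2 + b1 * b2 + b2 ^ 2)
  <= (2 * a1 * b1 + a1 * b2 + a2 * b1 + 2 * a2 * b2) ^ 2.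
Proof.
move=> a1_ge0 a2_ge0 b1_ge0 b2_ge0.
have := Rmult_le_pos _ _ a1_ge0 b1_ge0; have := Rmult_le_pos _ _ a2_ge0 b2_ge0.
have := Rmult_le_pos _ _ a1_ge0 b2_ge0; have := Rmult_le_pos _ _ a2_ge0 b1_ge0.
nra.
Qed.

Lemma vcross_lagrange p u : vcross p u ^ 2 = vnorm2 p * vnorm2 u - vdot p u ^ 2.
Proof. rewrite /vcross /vnorm2 /vdot; ring. Qed.

(* Expand a and b in the basis (p, u): vcross p u * a = vcross a u * p + vcross p a * u. *)
Lemma vcross_gram p u a b :
  vcross p u ^ 2 * vdot a b =
  vcross a u * vcross b u * vnorm2 p
  + (vcross a u * vcross p b + vcross p a * vcross b u) * vdot p u
  + vcross p a * vcross p b * vnorm2 u.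
Proof. rewrite /vcross /vdot /vnorm2; ring. Qed.

Definition in_cone p u a := 0 <= vcross p a /\ 0 <= vcross a u.

Lemma cone60_dot_bound p u a b :
  vnorm2 p = 4 -> vnorm2 u = 4 -> vdot p u = 2 -> in_cone p u a -> in_cone p u b ->
  0 <= vdot a b /\ vnorm2 a * vnorm2 b <= 4 * vdot a b ^ 2.
Proof.
move=> p4 u4 pu2 [a2_ge0 a1_ge0] [b2_ge0 b1_ge0].
have k2 : vcross p u ^ 2 = 12 by rewrite vcross_lagrange p4 u4 pu2; ring.
have gram x y := vcross_gram p u x y; rewrite k2 p4 u4 pu2 in gram.
have vnorm2E x : vnorm2 x = vdot x x by rewrite /vnorm2 /vdot; ring.
have := gram a b; have := gram a a; have := gram b b; rewrite -!vnorm2E.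
have := @eisenstein_polar_sqr _ _ _ _ a1_ge0 a2_ge0 b1_ge0 b2_ge0.
have := Rmult_le_pos _ _ a1_ge0 b1_ge0; have := Rmult_le_pos _ _ a2_ge0 b2_ge0.
have := Rmult_le_pos _ _ a1_ge0 b2_ge0; have := Rmult_le_pos _ _ a2_ge0 b1_ge0.
set a1 := vcross a u; set a2 := vcross p a; set b1 := vcross b u; set b2 := vcross p b.
move=> a2b1_ge0 a1b2_ge0 a2b2_ge0 a1b1_ge0 polar bb aa ab.
have -> : vdot a b = (2 * a1 * b1 + a1 * b2 + a2 * b1 + 2 * a2 * b2) / 6 by lra.
have -> : vnorm2 a = (a1 ^ 2 + a1 * a2 + a2 ^ 2) / 3 by lra.
have -> : vnorm2 b = (b1 ^ 2 + b1 * b2 + b2 ^ 2) / 3 by lra.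
split; lra.
Qed.

(* The second hypothesis says that a and b make an angle of at most 60 degrees;
   then the shorter of the two has squared norm at most 2 a.b. *)
Lemma vnorm2_vsub_le a b M : 0 <= vdot a b -> vnorm2 a * vnorm2 b <= 4 * vdot a b ^ 2 ->
  vnorm2 a <= M -> vnorm2 b <= M -> vnorm2 (vsub a b) <= M.
Proof.
move=> ab_ge0 angle aM bM.
have -> : vnorm2 (vsub a b) = vnorm2 a + vnorm2 b - 2 * vdot a b.
  by rewrite /vnorm2 /vdot /=; ring.
have := vnorm2_ge0 a; have := vnorm2_ge0 b.
case: (Rle_lt_dec (vnorm2 a) (vnorm2 b)) => [le | lt] ? ?.
- have : vnorm2 a <= 2 * vdot a b by nra. lra.
- have : vnorm2 b <= 2 * vdot a b by nra. lra.
Qed.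

Lemma cone60_close p u a b M :
  vnorm2 p = 4 -> vnorm2 u = 4 -> vdot p u = 2 -> in_cone p u a -> in_cone p u b ->
  vnorm2 a <= M -> vnorm2 b <= M -> vnorm2 (vsub a b) <= M.
Proof.
move=> p4 u4 pu2 cone_a cone_b.
have [] := cone60_dot_bound _ _ _ _ p4 u4 pu2 cone_a cone_b.
exact: vnorm2_vsub_le.
Qed.

(* hex k = 2 (cos (k pi/3), sin (k pi/3)); in particular hex 6 = hex 0. *)
Definition hex (k : nat) : R * R :=
  match k with
  | 1 => (1, sqrt 3) | 2 => (-1, sqrt 3) | 3 => (-2, 0)
  | 4 => (-1, - sqrt 3) | 5 => (1, - sqrt 3) | _ => (2, 0)
  end.

Definition hex_cone k := in_cone (hex k) (hex k.+1).

Lemma hex_adjacent k : (k < 6)%nat ->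
  vnorm2 (hex k) = 4 /\ vnorm2 (hex k.+1) = 4 /\ vdot (hex k) (hex k.+1) = 2.
Proof.
have s3 : sqrt 3 ^ 2 = 3 by apply: pow2_sqrt; lra.
by case: k => [|[|[|[|[|[|]]]]]] // _; rewrite /vnorm2 /vdot /=; repeat split; nra.
Qed.

Lemma hex_cone_close k a b M : (k < 6)%nat -> hex_cone k a -> hex_cone k b ->
  vnorm2 a <= M -> vnorm2 b <= M -> vnorm2 (vsub a b) <= M.
Proof. by move=> /hex_adjacent [p4 [u4 pu2]]; apply: cone60_close. Qed.

Lemma hex_cone_cover a : exists k : 'I_6, hex_cone k a.
Proof.
have s3 : 0 < sqrt 3 by apply: sqrt_lt_R0; lra.
case: a => x y; rewrite /hex_cone /in_cone /vcross.
case: (Rle_lt_dec 0 y) => y0; case: (Rle_lt_dec y (sqrt 3 * x)) => y1;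
  case: (Rle_lt_dec (- (sqrt 3 * x)) y) => y2;
  first [ by exists (@Ordinal 6 0 isT) => /=; lra
        | by exists (@Ordinal 6 1 isT) => /=; lra
        | by exists (@Ordinal 6 2 isT) => /=; lra
        | by exists (@Ordinal 6 3 isT) => /=; lra
        | by exists (@Ordinal 6 4 isT) => /=; lra
        | by exists (@Ordinal 6 5 isT) => /=; lra ].
Qed.

Lemma positive_axis_in_hex_cones a : a.2 = 0 -> 0 <= a.1 -> hex_cone 0 a /\ hex_cone 5 a.
Proof.
have s3 := sqrt_pos 3.
by case: a => x y /= -> x_ge0; rewrite /hex_cone /in_cone /vcross /=; split; split; nra.
Qed.

Lemma no_six_far_points_from_axis (p : 'I_6 -> R * R) M :
  (p ord0).2 = 0 -> 0 <= (p ord0).1 ->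
  (forall i, vnorm2 (p i) <= M) ->
  (forall i j, i != j -> M < vnorm2 (vsub (p i) (p j))) -> False.
Proof.
move=> axis2 axis1 small far.
have near i j (k : 'I_6) : hex_cone k (p i) -> hex_cone k (p j) -> i = j.
  move=> cone_i cone_j; apply/eqP; apply: contraT => ij.
  by have := far i j ij; have := hex_cone_close _ _ _ _ (ltn_ord k) cone_i cone_j (small i) (small j); lra.
have [f f_cone] := fin_all_exists (fun i => hex_cone_cover (p i)).
have f_inj : injective f by move=> i j fij; apply: (near i j (f i)); rewrite // fij.
have [g fK gK] := injF_bij f_inj.
have g_ord0 (k : 'I_6) : hex_cone k (p ord0) -> g k = ord0.
  by have := f_cone (g k); rewrite gK; apply: near.
have [cone0 cone5] := positive_axis_in_hex_cones _ axis2 axis1.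
by have := can_inj gK (etrans (g_ord0 ord0 cone0) (esym (g_ord0 ord_max cone5))).
Qed.

Definition cmul z a : R * R := (z.1 * a.1 - z.2 * a.2, z.1 * a.2 + z.2 * a.1).

Lemma vnorm2_cmul z a : vnorm2 (cmul z a) = vnorm2 z * vnorm2 a.
Proof. rewrite /vnorm2 /=; ring. Qed.

Lemma vsub_cmul z a b : vsub (cmul z a) (cmul z b) = cmul z (vsub a b).
Proof. by rewrite /vsub /cmul /=; f_equal; ring. Qed.

Lemma no_six_far_points (p : 'I_6 -> R * R) M :
  (forall i, vnorm2 (p i) <= M) ->
  (forall i j, i != j -> M < vnorm2 (vsub (p i) (p j))) -> False.
Proof.
move=> small far.
case E0: (p ord0) => [x0 y0].
have [N0 | N_pos] : x0 ^ 2 + y0 ^ 2 = 0 \/ 0 < x0 ^ 2 + y0 ^ 2 by nra.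
- by apply: (no_six_far_points_from_axis p M) => //; rewrite E0 /=; nra.
- pose z : R * R := (x0, - y0).
  have z_norm : vnorm2 z = x0 ^ 2 + y0 ^ 2 by rewrite /vnorm2 /=; ring.
  apply: (no_six_far_points_from_axis (fun i => cmul z (p i)) (vnorm2 z * M)).
  + by rewrite E0 /=; ring.
  + by rewrite E0 /=; nra.
  + by move=> i; rewrite vnorm2_cmul; apply: Rmult_le_compat_l; [lra | apply: small].
  + by move=> i j ij; rewrite vsub_cmul vnorm2_cmul; apply: Rmult_lt_compat_l; [lra | apply: far].
Qed.

Lemma no_six_disjoint_disks_meet_smaller_disk c rho (a : 'I_6 -> R * R) (ra : 'I_6 -> R) :
  0 < rho -> (forall i, rho <= ra i) ->
  (forall i, vdist (a i) c <= rho + ra i) ->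
  (forall i j, i != j -> ra i + ra j < vdist (a i) (a j)) -> False.
Proof.
move=> rho_gt0 ra_ge meet disjoint.
have [q q_spec] :=
  fin_all_exists (fun i => shrink_towards_centre _ _ _ _ (conj rho_gt0 (ra_ge i)) (meet i)).
apply: (no_six_far_points (fun i => vsub (q i) c) ((2 * rho) ^ 2)) => [i | i j ij].
- have [q_near _] := q_spec i.
  by rewrite -vdist_sqr; have := vdist_ge0 (q i) c; nra.
- have -> : vnorm2 (vsub (vsub (q i) c) (vsub (q j) c)) = vnorm2 (vsub (q i) (q j)).
    by rewrite /vnorm2 /=; ring.
  have [_ q_in_i] := q_spec i; have [_ q_in_j] := q_spec j.
  have : 2 * rho < vdist (q i) (q j).
    have := disjoint i j ij; rewrite vdist_sym in q_in_i.
    have := vdist_triangle (a i) (q i) (a j); have := vdist_triangle (q i) (q j) (a j).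
    lra.
  rewrite -vdist_sqr; nra.
Qed.

End Plane.

Lemma exists_minimizer (T : finType) (f : T -> R) (v0 : T) :
  exists v, forall u, (f v <= f u)%R.
Proof.
pose le_f : rel T := fun u w => Rle_dec (f u) (f w).
have le_f_refl : reflexive le_f by move=> u; rewrite /le_f; case: Rle_dec => //=; lra.
have le_f_trans : transitive le_f by move=> w u z; rewrite /le_f; do 3 case: Rle_dec => //=; lra.
have le_f_total : total le_f by move=> u w; rewrite /le_f; do 2 case: Rle_dec => //=; lra.
exists (extremum le_f v0 predT (fun u => u)).
case: extremumP => // v _ v_min u.
by have := v_min u isT; rewrite /le_f; case: Rle_dec.
Qed.

Lemma closed_nbhd_indep_adj (T : finType) (adj : rel T) v x y :
  closed_nbhd adj v x -> closed_nbhd adj v y -> x != y -> ~~ adj x y -> adj v x.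
Proof.
rewrite /closed_nbhd => /orP [/eqP -> | //] /orP [/eqP -> | vy]; first by rewrite eqxx.
by rewrite vy.
Qed.

Theorem lemma5p1 (T : finType) (adj : rel T) :
  simple_graph adj ->
  circle_intersection_graph adj ->
  0 < #|T| ->
  exists v : T, ~ has_induced_K16_in adj (closed_nbhd adj v).
Proof.
move=> [_ adj_irr] [cx [cy [r [r_pos adj_disks]]]] /card_gt0P [v0 _].
pose c u : R * R := (cx u, cy u).
have [v v_min] := exists_minimizer _ r v0.
exists v => [[_ [y [_ [y_nbhd [y_inj [_ y_indep]]]]]]].
have y_neq i j : i != j -> y i != y j by apply: contra => /eqP /y_inj ->.
have leaf_adj i : adj v (y i).
  have i_lift := neq_lift i ord0.
  exact: closed_nbhd_indep_adj (y_nbhd i) (y_nbhd _) (y_neq _ _ i_lift) (y_indep _ _ i_lift).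
apply: (no_six_disjoint_disks_meet_smaller_disk (c v) (r v) (c \o y) (r \o y))
  => [| i | i | i j ij] /=.
- exact: r_pos.
- exact: v_min.
- have v_yi : v != y i by apply: contraTneq (leaf_adj i) => ->; rewrite adj_irr.
  by rewrite vdist_sym; apply/(adj_disks _ _ v_yi).
- apply: Rnot_le_lt => meet.
  by move/negP: (y_indep _ _ ij); apply; apply/(adj_disks _ _ (y_neq _ _ ij)).
Qed.
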